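(* Let $\mathfrak g$ be of type $A_n$ and $J\subseteq I$. Then for $s\ge1$ $$\mathbf A_{s,J}=\bigl\{\{\alpha_{i_k,j_k}\}_{1\le k\le s}\in\mathbf A_s:\ i_k,j_k\notin J\text{ for all }k\bigr\}.$$ In particular $\#\mathbf A_{s,J}=\binom{n-\#J}{2s}+\binom{n-\#J}{2s-1}$ for $s\ge1$ and $\sum_{s\ge0}\#\mathbf A_{s,J}=2^{n-\#J}$.
   Context: Simple roots $\alpha_1,\dots,\alpha_n$ of $A_n$ numbered as in Bourbaki, $I=\{1,\dots,n\}$; $\alpha_{i,j}=\alpha_i+\dots+\alpha_j$ for $i\le j$, $\theta=\alpha_{1,n}$. For $\eta=\sum_i d_i(\eta)\alpha_i$, $R^+(J)=\{\alpha\in R^+:d_i(\alpha)=0\ \forall i\notin J\}$. A $J$-antichain is a subset $A\subseteq R^+$ with $A\cap R^+(J)=\emptyset$, distinct elements pairwise incomparable (order: $\lambda\le\mu$ iff $\mu-\lambda$ is a nonnegative integer combination of simple roots), and $\alpha-\alpha_j\notin R$ for $\alpha\in A$, $j\in J$. $\Phi(A)=\{\alpha\in R^+:\alpha\ge\beta$ for some $\beta\in A\}$; $A$ is abelian if $\beta_1+\beta_2\notin R$ for all $\beta_1,\beta_2\in\Phi(A)$. $\mathbf A_{s,J}$ is the set of abelian $J$-antichains with $s$ elements, $\mathbf A_{0,J}$ consists of the empty antichain, and $\mathbf A_s=\mathbf A_{s,\emptyset}$, which equals $\{\{\alpha_{i_k,j_k}\}_{1\le k\le s}: i_1<\dots<i_s\le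 j_1<\dots<j_s\}$. Convention: $\binom{m}{k}=0$ if $k>m$. *)

(* Root system of type A_n, n >= 1.
   Simple root alpha_{k+1} is indexed by k : 'I_n (0-based shift of Bourbaki numbering).
   An element eta = sum_i d_i(eta) alpha_i of the root lattice is represented by its
   coefficient vector {ffun 'I_n -> int}. A positive root alpha_{i,j} (i <= j) is
   represented by the pair (i,j) : 'I_n * 'I_n. *)
From HB Require Import structures.
From mathcomp Require Import all_boot all_order all_algebra.
Set Implicit Arguments. Unset Strict Implicit. Unset Printing Implicit Defensive.
Import Order.TTheory GRing.Theory Num.Theory intZmod.
Local Open Scope ring_scope.

Section A.
Variable n : nat.

Definition posroots : {set 'I_n * 'I_n} := [set p : 'I_n * 'I_n | (p.1 <= p.2)%N].

Definition rv (p : 'I_n * 'I_n) : {ffun 'I_n -> int} :=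
  [ffun k : 'I_n => (((p.1 <= k) && (k <= p.2))%N)%:Z].

Definition simple (j : 'I_n) : {ffun 'I_n -> int} := [ffun k : 'I_n => ((k == j) : nat)%:Z].

Definition vadd (u v : {ffun 'I_n -> int}) : {ffun 'I_n -> int} := [ffun k : 'I_n => (u k + v k)%R].
Definition vsub (u v : {ffun 'I_n -> int}) : {ffun 'I_n -> int} := [ffun k : 'I_n => (u k - v k)%R].
Definition vopp (u : {ffun 'I_n -> int}) : {ffun 'I_n -> int} := [ffun k : 'I_n => (- u k)%R].

Definition isRoot (v : {ffun 'I_n -> int}) : bool :=
  [exists p in posroots, (v == rv p) || (v == vopp (rv p))].

Definition rle (lam mu : {ffun 'I_n -> int}) : bool :=
  [forall k : 'I_n, (0 <= mu k - lam k)%R].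

Definition RplusJ (J : {set 'I_n}) : {set 'I_n * 'I_n} :=
  [set p in posroots | [forall i : 'I_n, (i \notin J) ==> (rv p i == 0%R)]].

Definition J_antichain (J : {set 'I_n}) (A : {set 'I_n * 'I_n}) : bool :=
  [&& A \subset posroots,
      [disjoint A & RplusJ J],
      [forall a in A, forall b in A, (a != b) ==> ~~ rle (rv a) (rv b)] &
      [forall a in A, forall j in J, ~~ isRoot (vsub (rv a) (simple j))]].

Definition Phi (A : {set 'I_n * 'I_n}) : {set 'I_n * 'I_n} :=
  [set p in posroots | [exists b in A, rle (rv b) (rv p)]].

Definition abelianA (A : {set 'I_n * 'I_n}) : bool :=
  [forall b1 in Phi A, forall b2 in Phi A, ~~ isRoot (vadd (rv b1) (rv b2))].

Definition AsJ (s : nat) (J : {set 'I_n}) : {set {set 'I_n * 'I_n}} :=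
  [set A | [&& J_antichain J A, abelianA A & #|A| == s]].

Definition As (s : nat) : {set {set 'I_n * 'I_n}} := AsJ s set0.

End A.

From HB Require Import structures.
From mathcomp Require Import all_boot all_order all_algebra zify.
Set Implicit Arguments. Unset Strict Implicit. Unset Printing Implicit Defensive.
Import Order.TTheory GRing.Theory Num.Theory.

(* A positive root alpha_{i,j} is an interval [i, j] of simple roots.  Everything
   reduces to the combinatorics of intervals:
   - the order on roots is reverse inclusion of intervals (rle_rv);
   - alpha - alpha_j is a root iff j is an endpoint of a non-simple alpha
     (sub_first_root, sub_last_root, sub_inner_notroot), so the J-conditions say
     exactly that no endpoint lies in J (J_antichainE);
   - the sum of two positive roots is never a root when the intervals overlap and
     is a root when they are adjacent, so abelianity of Phi(A) means that every
     left endpoint is <= every right endpoint (abelianAE).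
   Hence A_s is the set of "staircases": s pairwise non-nested intervals with all
   left ends <= all right ends, and A_{s,J} those whose endpoints avoid J (part 1).
   For counting, a staircase A is determined by its endpoint set E, which has 2s or
   2s-1 elements: listing E increasingly, A pairs the t-th point with the
   (t + #|E|/2)-th one (staircase_of_endpoints).  Conversely every subset of
   size 2s or 2s-1 arises (endpoints_staircase_of).  So A |-> E is a bijection
   onto such subsets of the complement of J (card_AsJ), and summing binomial
   coefficients over s gives 2^(n - #|J|). *)

Section RootsOfTypeA.
Variable n : nat.
Implicit Types (p q a b : 'I_n * 'I_n) (A : {set 'I_n * 'I_n}) (J : {set 'I_n}).

Lemma rvE p k : rv p k = Posz ((p.1 <= k <= p.2)%N : nat).
Proof. by rewrite ffunE. Qed.

Lemma rv_first p : p \in posroots n -> rv p p.1 = 1%R.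
Proof. by rewrite inE => le_p; rewrite rvE leqnn le_p. Qed.

Lemma adjacent_sum p q : (p.1 <= p.2)%N -> p.2.+1 = q.1 -> (q.1 <= q.2)%N ->
  vadd (rv p) (rv q) = rv (p.1, q.2).
Proof.
move=> le_p pq le_q; apply/ffunP => k; rewrite !ffunE /=.
by case: (leqP p.1 k); case: (leqP k p.2); case: (leqP q.1 k); case: (leqP k q.2) => /=; lia.
Qed.

Lemma sub_first_root a : (a.1 < a.2)%N -> isRoot (vsub (rv a) (simple a.1)).
Proof.
move=> lt_a; have lt1 : (a.1.+1 < n)%N := leq_ltn_trans lt_a (ltn_ord a.2).
apply/existsP; exists (Ordinal lt1, a.2); rewrite inE /= lt_a /=; apply/orP; left.
apply/eqP/ffunP => k; rewrite !ffunE /= -val_eqE /=.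
by case: eqP; case: (leqP a.1 k); case: (leqP k a.2); case: (leqP a.1.+1 k) => /=; lia.
Qed.

Lemma sub_last_root a : (a.1 < a.2)%N -> isRoot (vsub (rv a) (simple a.2)).
Proof.
move=> lt_a; have lt1 : (a.2.-1 < n)%N := leq_ltn_trans (leq_pred _) (ltn_ord a.2).
apply/existsP; exists (a.1, Ordinal lt1); rewrite inE /=; apply/andP; split; first lia.
apply/orP; left; apply/eqP/ffunP => k; rewrite !ffunE /= -val_eqE /=.
by case: eqP; case: (leqP a.1 k); case: (leqP k a.2); case: (leqP k a.2.-1) => /=; lia.
Qed.

(* Subtracting a simple root that is not an endpoint never gives a root: inside
   the interval it leaves a hole, outside it creates a coefficient -1. *)
Lemma sub_inner_notroot a (j : 'I_n) : (a.1 <= a.2)%N ->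
  j != a.1 -> j != a.2 -> ~~ isRoot (vsub (rv a) (simple j)).
Proof.
move=> le_a ne1 ne2; apply/existsP => -[p /andP[_ /orP[] /eqP /ffunP e]].
- have e1 := e a.1; have e2 := e a.2; have ej := e j.
  rewrite !ffunE leqnn le_a eq_sym (negbTE ne1) /= subr0 in e1.
  rewrite !ffunE leqnn le_a eq_sym (negbTE ne2) /= subr0 in e2.
  rewrite !ffunE eqxx /= in ej.
  move: e1 e2 ej; case: (leqP p.1 a.1); case: (leqP a.1 p.2); case: (leqP p.1 a.2);
    case: (leqP a.2 p.2); case: (leqP a.1 j); case: (leqP j a.2);
    case: (leqP p.1 j); case: (leqP j p.2) => //=; lia.
- have e1 := e a.1; rewrite !ffunE leqnn le_a eq_sym (negbTE ne1) /= subr0 in e1.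
  by move: e1; case: (_ && _).
Qed.

Lemma posroot_isRoot p : p \in posroots n -> isRoot (rv p).
Proof. by move=> pP; apply/existsP; exists p; rewrite pP eqxx. Qed.

(* Overlapping intervals sum to a vector with a coefficient 2, never a root. *)
Lemma overlap_sum_notroot a b (k : 'I_n) :
  (a.1 <= k <= a.2)%N -> (b.1 <= k <= b.2)%N -> ~~ isRoot (vadd (rv a) (rv b)).
Proof.
move=> ka kb; apply/existsP => -[p /andP[_ /orP[] /eqP /ffunP /(_ k)]];
  by rewrite !ffunE ka kb; case: (_ && _).
Qed.

Lemma rle_rv a b : a \in posroots n ->
  rle (rv a) (rv b) = (b.1 <= a.1)%N && (a.2 <= b.2)%N.
Proof.
rewrite inE => le_a; apply/forallP/andP => [le_ab | [le1 le2] k].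
- move: (le_ab a.1) (le_ab a.2); rewrite !rvE !leqnn le_a /=.
  by case: (b.1 <= a.1)%N; case: (a.2 <= b.2)%N; rewrite /= ?andbF.
- by rewrite !rvE; case: (leqP a.1 k); case: (leqP k a.2) => /=; lia.
Qed.

Lemma RplusJ0 : RplusJ (@set0 'I_n) = set0.
Proof.
apply/setP => p; rewrite !inE; apply/negbTE/negP => /andP[pP /forallP /(_ p.1)].
by rewrite inE /= rvE leqnn pP.
Qed.

Lemma J_antichain_set0 A : J_antichain set0 A =
  (A \subset posroots n) && [forall a in A, forall b in A, (a != b) ==> ~~ rle (rv a) (rv b)].
Proof.
rewrite /J_antichain RplusJ0 disjoints_subset setC0 subsetT /=.
have -> : [forall a in A, forall j in set0, ~~ isRoot (vsub (rv a) (simple j))].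
  by apply/forall_inP => a _; apply/forall_inP => j; rewrite inE.
by rewrite andbT.
Qed.

Lemma endpoint_condition J p : p \in posroots n ->
  (p \notin RplusJ J) && [forall j in J, ~~ isRoot (vsub (rv p) (simple j))]
  = (p.1 \notin J) && (p.2 \notin J).
Proof.
move=> pP; have le_p : (p.1 <= p.2)%N by rewrite inE in pP.
apply/andP/andP => [[notR /forall_inP subJ] | [n1 n2]].
- case: (ltngtP p.1 p.2) le_p => // [lt_p | eq_p] _.
    by split; apply/negP => jJ; move: (subJ _ jJ); rewrite ?sub_first_root ?sub_last_root.
  have -> : p.2 = p.1 by apply/val_inj.
  suff n1 : p.1 \notin J by [].
  apply: contra notR => p1J; rewrite inE pP; apply/forallP => i.
  apply/implyP => iJ; rewrite rvE; case: (leqP p.1 i); case: (leqP i p.2) => //= ? ?.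
  by move: iJ; rewrite (_ : i = p.1) ?p1J //; apply: ord_inj; lia.
- split.
    apply: contra n1 => /setIdP[_ /forallP /(_ p.1)].
    by rewrite rv_first // implybF negbK.
  apply/forall_inP => j jJ; apply: sub_inner_notroot => //;
    [apply: contraNneq n1 | apply: contraNneq n2]; by move=> <-.
Qed.

Lemma J_antichainE J A : J_antichain J A =
  J_antichain set0 A && [forall p in A, (p.1 \notin J) && (p.2 \notin J)].
Proof.
rewrite J_antichain_set0 /J_antichain; case sub: (A \subset posroots n) => //=.
rewrite -(eq_forallb_in (fun p pA => endpoint_condition J (subsetP sub p pA))).
apply/and3P/andP => [[dis anti roots] | [anti /forall_inP ends]]; split => //.
- by apply/forall_inP => p pA; rewrite (disjointFr dis pA) (forall_inP roots p pA).
- by rewrite disjoints_subset; apply/subsetP => p pA; rewrite inE; case/andP: (ends p pA).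
- by apply/forall_inP => p pA; case/andP: (ends p pA).
Qed.

Lemma mem_Phi A p : A \subset posroots n ->
  (p \in Phi A) = (p \in posroots n) && [exists b in A, (p.1 <= b.1)%N && (b.2 <= p.2)%N].
Proof.
move=> sub; rewrite inE; congr (_ && _); apply: eq_existsb_in => b bA.
exact: rle_rv (subsetP sub b bA).
Qed.

(* If b ends before a starts, the interval from b.1 up to just before a.1 lies in
   Phi(A) and is adjacent to a, so their sum is a root: A is not abelian. *)
Lemma abelian_first_le_last A a b : A \subset posroots n -> abelianA A ->
  a \in A -> b \in A -> (a.1 <= b.2)%N.
Proof.
move=> sub ab aA bA; rewrite leqNgt; apply/negP => lt_ba.
have aP := subsetP sub a aA; have bP := subsetP sub b bA.
have le_a : (a.1 <= a.2)%N by rewrite inE in aP.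
have le_b : (b.1 <= b.2)%N by rewrite inE in bP.
have lt_pred : (a.1.-1 < n)%N := leq_ltn_trans (leq_pred _) (ltn_ord a.1).
pose p := (b.1, Ordinal lt_pred).
have pPhi : p \in Phi A.
  by rewrite mem_Phi // inE /=; apply/andP; split; [lia | apply/existsP; exists b; rewrite bA /=; lia].
have aPhi : a \in Phi A.
  by rewrite mem_Phi // aP; apply/existsP; exists a; rewrite aA !leqnn.
have : isRoot (vadd (rv p) (rv a)).
  by rewrite adjacent_sum /= ?posroot_isRoot ?inE //=; lia.
by rewrite (negbTE (forall_inP (forall_inP ab p pPhi) a aPhi)).
Qed.

(* Conversely, if all left ends precede all right ends, any two intervals of
   Phi(A) share the larger of the two left endpoints they contain. *)
Lemma first_le_last_abelian A : A \subset posroots n ->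
  [forall a in A, forall b in A, (a.1 <= b.2)%N] -> abelianA A.
Proof.
move=> sub /forall_inP fl; apply/forall_inP => p1; rewrite mem_Phi //.
case/andP=> _ /exists_inP[a1 a1A /andP[l1 r1]].
apply/forall_inP => p2; rewrite mem_Phi // => /andP[_ /exists_inP[a2 a2A /andP[l2 r2]]].
have c12 := forall_inP (fl a1 a1A) a2 a2A; have c21 := forall_inP (fl a2 a2A) a1 a1A.
have le1 : (a1.1 <= a1.2)%N by have := subsetP sub a1 a1A; rewrite inE.
have le2 : (a2.1 <= a2.2)%N by have := subsetP sub a2 a2A; rewrite inE.
by case: (leqP a1.1 a2.1) => c; [apply: (overlap_sum_notroot (k := a2.1)) |
  apply: (overlap_sum_notroot (k := a1.1))]; lia.
Qed.

Lemma abelianAE A : A \subset posroots n ->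
  abelianA A = [forall a in A, forall b in A, (a.1 <= b.2)%N].
Proof.
move=> sub; apply/idP/idP => [ab|]; last exact: first_le_last_abelian.
by apply/forall_inP => a aA; apply/forall_inP => b bA; apply: abelian_first_le_last ab aA bA.
Qed.

Definition staircase A : bool :=
  [&& A \subset posroots n,
      [forall a in A, forall b in A, (a != b) ==> ~~ ((b.1 <= a.1)%N && (a.2 <= b.2)%N)] &
      [forall a in A, forall b in A, (a.1 <= b.2)%N]].

Lemma As_staircase s A : (A \in As n s) = staircase A && (#|A| == s).
Proof.
rewrite inE J_antichain_set0 /staircase -!andbA; case sub: (A \subset posroots n) => //=.
rewrite abelianAE //; congr (_ && _); apply: eq_forallb_in => a aA.
by apply: eq_forallb_in => b bA; rewrite rle_rv // (subsetP sub).
Qed.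

Lemma AsJ_endpoints s J :
  AsJ s J = [set A in As n s | [forall p in A, (p.1 \notin J) && (p.2 \notin J)]].
Proof.
apply/setP => A; rewrite !inE J_antichainE.
by case: (J_antichain set0 A) (abelianA A) (#|A| == s) => [] [] []; rewrite /= ?andbT ?andbF.
Qed.

Lemma staircaseP A : reflect
  [/\ A \subset posroots n,
      forall a b : 'I_n * 'I_n, a \in A -> b \in A -> a != b ->
        ~~ ((b.1 <= a.1)%N && (a.2 <= b.2)%N) &
      forall a b : 'I_n * 'I_n, a \in A -> b \in A -> (a.1 <= b.2)%N]
  (staircase A).
Proof.
apply: (iffP and3P) => -[sub nest fl]; split => //.
- by move=> a b aA bA; apply/implyP; exact: (forall_inP (forall_inP nest a aA) b bA).
- by move=> a b aA bA; exact: (forall_inP (forall_inP fl a aA) b bA).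
- by apply/forall_inP => a aA; apply/forall_inP => b bA; apply/implyP; exact: nest.
- by apply/forall_inP => a aA; apply/forall_inP => b bA; exact: fl.
Qed.

Lemma staircase_mono A a b : staircase A -> a \in A -> b \in A ->
  (a.1 <= b.1)%N = (a.2 <= b.2)%N.
Proof.
case/staircaseP => _ nest _ aA bA.
have [->|ab] := eqVneq a b; first by rewrite !leqnn.
have := nest a b aA bA ab; have := nest b a bA aA (contra_neq esym ab).
by case: leqP; case: leqP => //=; lia.
Qed.

Lemma staircase_fst_inj A : staircase A -> {in A &, injective (fun p => p.1)}.
Proof.
move=> sA a b aA bA e; have := staircase_mono sA aA bA; have := staircase_mono sA bA aA.
rewrite e leqnn; case: a b {aA bA} e => [a1 a2] [b1 b2] /= -> h1 h2.
by congr pair; apply: ord_inj; lia.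
Qed.

Lemma staircase_snd_inj A : staircase A -> {in A &, injective (fun p => p.2)}.
Proof.
move=> sA a b aA bA e; have := staircase_mono sA aA bA; have := staircase_mono sA bA aA.
rewrite e leqnn; case: a b {aA bA} e => [a1 a2] [b1 b2] /= -> h1 h2.
by congr pair; apply: ord_inj; lia.
Qed.

Definition endpoints A : {set 'I_n} := [set p.1 | p in A] :|: [set p.2 | p in A].

(* The 2 #|A| endpoints of a staircase are distinct, except that the largest left
   end may coincide with the smallest right end. *)
Lemma card_endpoints A : staircase A ->
  exists2 c, (c <= 1)%N & #|endpoints A| + c = #|A| + #|A|.
Proof.
move=> sA; have /staircaseP[_ _ fl] := sA.
exists #|[set p.1 | p in A] :&: [set p.2 | p in A]|; last first.
  by rewrite cardsUI !card_in_imset //; [exact: staircase_snd_inj | exact: staircase_fst_inj].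
have [->|[x]] := set_0Vmem ([set p.1 | p in A] :&: [set p.2 | p in A]); first by rewrite cards0.
rewrite inE => /andP[/imsetP[a aA ->] /imsetP[b bA eb]].
rewrite -(cards1 a.1); apply: subset_leq_card; apply/subsetP => y.
rewrite !inE => /andP[/imsetP[c cA ->] /imsetP[d dA ed]].
have := fl c b cA bA; have := fl a d aA dA; rewrite -eb -ed => ca ac.
by apply/eqP/ord_inj/eqP; rewrite eqn_leq ca ac.
Qed.
End RootsOfTypeA.

Section RankInSubset.
Variable n : nat.
Implicit Types (S : {set 'I_n}) (y z : 'I_n).

Definition rank S y := #|[set z in S | (z <= y)%N]|.
Definition corank S y := #|[set z in S | (y <= z)%N]|.

Lemma rank_mono S y z : (y <= z)%N -> (rank S y <= rank S z)%N.
Proof.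
move=> le_yz; apply: subset_leq_card; apply/subsetP => w; rewrite !inE.
by case/andP => -> /= le_wy; apply: leq_trans le_wy le_yz.
Qed.

Lemma rank_strict S y z : z \in S -> (y < z)%N -> (rank S y < rank S z)%N.
Proof.
move=> zS lt_yz; apply: proper_card; apply/properP; split.
  apply/subsetP => w; rewrite !inE; case/andP => -> /= le_wy; lia.
by exists z; rewrite !inE ?zS ?leqnn // -ltnNge.
Qed.

Lemma rank_inj S : {in S &, injective (rank S)}.
Proof.
move=> y z yS zS e; apply: ord_inj; case: (ltngtP y z) => // lt.
- by move: (rank_strict zS lt); rewrite e ltnn.
- by move: (rank_strict yS lt); rewrite e ltnn.
Qed.

Lemma rank_gt0 S y : y \in S -> (0 < rank S y)%N.
Proof. by move=> yS; apply/card_gt0P; exists y; rewrite inE yS leqnn. Qed.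

Lemma rank_le_card S y : (rank S y <= #|S|)%N.
Proof. by apply: subset_leq_card; apply/subsetP => z; rewrite inE => /andP[]. Qed.

(* A point of S is counted by both its rank and its corank. *)
Lemma rank_add_corank S y : y \in S -> rank S y + corank S y = #|S|.+1.
Proof.
move=> yS; rewrite /rank /corank -cardsUI -addn1.
have -> : [set z in S | (z <= y)%N] :|: [set z in S | (y <= z)%N] = S.
  by apply/setP => z; rewrite !inE -andb_orr leq_total andbT.
have -> : [set z in S | (z <= y)%N] :&: [set z in S | (y <= z)%N] = [set y].
  apply/setP => z; rewrite !inE; apply/idP/eqP => [|->]; last by rewrite yS leqnn.
  by case/andP => /andP[_ ?] /andP[_ ?]; apply: ord_inj; lia.
by rewrite cards1.
Qed.

(* rank S maps S onto [1, #|S|]: an injection between sets of the same size. *)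
Lemma rank_onto S t : (0 < t <= #|S|)%N -> exists2 y, y \in S & rank S y = t.
Proof.
move=> t_range; have uniq_ranks : uniq [seq rank S y | y <- enum S].
  by rewrite map_inj_in_uniq ?enum_uniq // => y z; rewrite !mem_enum; exact: rank_inj.
have ranks_sub : {subset [seq rank S y | y <- enum S] <= iota 1 #|S|}.
  move=> r /mapP[y]; rewrite mem_enum mem_iota => yS ->.
  by have := rank_gt0 yS; have := rank_le_card S y; lia.
have size_le : (size (iota 1 #|S|) <= size [seq rank S y | y <- enum S])%N.
  by rewrite size_map size_iota -cardE.
have [_ eq_ranks] := uniq_min_size uniq_ranks ranks_sub size_le.
have : t \in iota 1 #|S| by rewrite mem_iota; lia.
by rewrite -eq_ranks => /mapP[y]; rewrite mem_enum => yS ->; exists y.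
Qed.

Lemma card_rank_le S t : (t <= #|S|)%N -> #|[set y in S | (rank S y <= t)%N]| = t.
Proof.
case: t => [_|t tS].
  apply/eqP; rewrite cards_eq0; apply/eqP/setP => y; rewrite !inE.
  by case yS: (y \in S) => //=; rewrite leqNgt rank_gt0.
have [z zS <-] := @rank_onto S t.+1 tS.
apply: eq_card => y; rewrite !inE; case yS: (y \in S) => //=.
case: (leqP y z) => [le_yz | lt_zy]; first by rewrite rank_mono.
by apply/negbTE; rewrite -ltnNge rank_strict.
Qed.
End RankInSubset.

Lemma half_split k s c : k + c = s + s -> (c <= 1)%N -> k./2 + c = s /\ k - k./2 = s.
Proof. move=> e hc; have := odd_double_half k; have := leq_b1 (odd k); rewrite -addnn; lia. Qed.

(* Rank bookkeeping used to identify a staircase from its endpoint set. *)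
Lemma rank_shift x y w k m c : x + y = m.+1 -> w + y = k.+1 -> k + c = m + m -> (c <= 1)%N ->
  w = x + k./2.
Proof. by move=> e1 e2 e3 hc; have [? _] := half_split e3 hc; lia. Qed.

Section EndpointBijection.
Variable n : nat.
Implicit Types (p q a b : 'I_n * 'I_n) (A : {set 'I_n * 'I_n}) (S : {set 'I_n}).

Definition staircase_of S : {set 'I_n * 'I_n} :=
  [set p | [&& p.1 \in S, p.2 \in S & rank S p.2 == rank S p.1 + #|S|./2]].

Lemma staircase_ofP S p : reflect
  [/\ p.1 \in S, p.2 \in S & rank S p.2 = rank S p.1 + #|S|./2] (p \in staircase_of S).
Proof. by rewrite inE; apply: (iffP and3P) => -[? ? /eqP ?]. Qed.

Lemma staircase_of_staircase S : staircase (staircase_of S).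
Proof.
have half_bound := odd_double_half #|S|; have odd_bound := leq_b1 (odd #|S|).
apply/staircaseP; split.
- apply/subsetP => p /staircase_ofP[p1 _ e]; rewrite inE leqNgt; apply/negP => lt.
  by have := rank_strict p1 lt; lia.
- move=> p q /staircase_ofP[p1 p2 e_p] /staircase_ofP[q1 q2 e_q].
  apply: contraNN => /andP[le1 le2].
  have := rank_mono S le1; have := rank_mono S le2 => r2 r1.
  have e1 : p.1 = q.1 by apply: (rank_inj p1 q1); lia.
  have e2 : p.2 = q.2 by apply: (rank_inj p2 q2); lia.
  by case: p q {p1 p2 e_p q1 q2 e_q le1 le2 r1 r2} e1 e2 => [? ?] [? ?] /= -> ->.
- move=> p q /staircase_ofP[p1 p2 e_p] /staircase_ofP[q1 q2 e_q].
  rewrite leqNgt; apply/negP => lt; have := rank_strict p1 lt.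
  by have := rank_gt0 q1; have := rank_le_card S p.2; lia.
Qed.

Lemma fst_staircase_of S :
  [set p.1 | p in staircase_of S] = [set y in S | (rank S y <= #|S| - #|S|./2)%N].
Proof.
apply/setP => y; rewrite inE; apply/imsetP/andP => [[[a b] /staircase_ofP[a1 b1 e] ->] | [yS le_y]].
  by split => //; have := rank_le_card S b; rewrite /= in e *; lia.
have t_range : (0 < rank S y + #|S|./2 <= #|S|)%N by have := rank_gt0 yS; lia.
have [z zS ez] := rank_onto t_range.
by exists (y, z) => //; apply/staircase_ofP.
Qed.

Lemma card_staircase_of S : #|staircase_of S| = #|S| - #|S|./2.
Proof.
rewrite -(card_rank_le (leq_subr _ #|S|)) -fst_staircase_of card_in_imset //.
exact: staircase_fst_inj (staircase_of_staircase S).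
Qed.

Lemma endpoints_staircase_of S : endpoints (staircase_of S) = S.
Proof.
apply/setP => y; rewrite !inE; apply/idP/idP.
  by case/orP => /imsetP[p /staircase_ofP[p1 p2 _] ->].
move=> yS; have half_bound := odd_double_half #|S|.
have [le_y | lt_y] := leqP (rank S y) (#|S| - #|S|./2).
  by rewrite fst_staircase_of inE yS le_y.
have t_range : (0 < rank S y - #|S|./2 <= #|S|)%N by have := rank_le_card S y; lia.
have [w wS ew] := rank_onto t_range.
apply/orP; right; apply/imsetP; exists (w, y) => //; apply/staircase_ofP; split => //=; lia.
Qed.

(* The points of endpoints A below a left end a.1 are left ends of intervals: a
   right end b.2 <= a.1 must equal a.1. *)
Lemma staircase_rank_fst A a : staircase A -> a \in A ->
  rank (endpoints A) a.1 = #|[set b in A | (b.1 <= a.1)%N]|.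
Proof.
move=> sA aA; have /staircaseP[_ _ fl] := sA.
rewrite /rank; suff -> : [set z in endpoints A | (z <= a.1)%N] = [set b.1 | b in [set b in A | (b.1 <= a.1)%N]].
  by apply: card_in_imset => b c; rewrite !inE => /andP[bA _] /andP[cA _]; exact: (staircase_fst_inj sA bA cA).
apply/setP => z; rewrite /endpoints !inE; apply/andP/imsetP.
- case=> /orP[] /imsetP[b bA ->] le_b; first by exists b; rewrite // inE bA.
  exists a; rewrite ?inE ?aA ?leqnn //; apply/ord_inj/eqP.
  by rewrite eqn_leq le_b fl.
- by case=> b; rewrite inE => /andP[bA le_b] ->; split => //; apply/orP; left; apply/imsetP; exists b.
Qed.

Lemma staircase_corank_snd A a : staircase A -> a \in A ->
  corank (endpoints A) a.2 = #|[set b in A | (a.2 <= b.2)%N]|.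
Proof.
move=> sA aA; have /staircaseP[_ _ fl] := sA.
rewrite /corank; suff -> : [set z in endpoints A | (a.2 <= z)%N] = [set b.2 | b in [set b in A | (a.2 <= b.2)%N]].
  by apply: card_in_imset => b c; rewrite !inE => /andP[bA _] /andP[cA _]; exact: (staircase_snd_inj sA bA cA).
apply/setP => z; rewrite /endpoints !inE; apply/andP/imsetP.
- case=> /orP[] /imsetP[b bA ->] le_b; last by exists b; rewrite // inE bA.
  exists a; rewrite ?inE ?aA ?leqnn //; apply/ord_inj/eqP.
  by rewrite eqn_leq le_b fl.
- by case=> b; rewrite inE => /andP[bA le_b] ->; split => //; apply/orP; right; apply/imsetP; exists b.
Qed.

(* The intervals starting at or before a and those ending at or after a cover A
   and meet only in a. *)
Lemma staircase_rank_corank A a : staircase A -> a \in A ->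
  rank (endpoints A) a.1 + corank (endpoints A) a.2 = #|A|.+1.
Proof.
move=> sA aA; rewrite staircase_rank_fst // staircase_corank_snd // -cardsUI -addn1.
have -> : [set b in A | (b.1 <= a.1)%N] :|: [set b in A | (a.2 <= b.2)%N] = A.
  apply/setP => b; rewrite !inE; case bA: (b \in A) => //=.
  by rewrite -(staircase_mono sA aA bA) leq_total.
have -> : [set b in A | (b.1 <= a.1)%N] :&: [set b in A | (a.2 <= b.2)%N] = [set a].
  apply/setP => b; rewrite !inE; apply/idP/eqP => [|->]; last by rewrite aA !leqnn.
  case/andP => /andP[bA le1] /andP[_ le2]; apply: (staircase_snd_inj sA bA aA).
  by apply/ord_inj/eqP; rewrite eqn_leq le2 andbT -(staircase_mono sA bA aA).
by rewrite cards1.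
Qed.

Lemma staircase_of_endpoints A : staircase A -> staircase_of (endpoints A) = A.
Proof.
move=> sA; have [c c_le1 card_E] := card_endpoints sA.
have [_ sub_half_E] := half_split card_E c_le1.
suff sub : A \subset staircase_of (endpoints A).
  by apply/eqP; rewrite eq_sym eqEcard sub card_staircase_of sub_half_E leqnn.
apply/subsetP => -[a1 a2] aA.
have a1E : a1 \in endpoints A by rewrite inE; apply/orP; left; apply/imsetP; exists (a1, a2).
have a2E : a2 \in endpoints A by rewrite inE; apply/orP; right; apply/imsetP; exists (a1, a2).
apply/staircase_ofP; split => //=.
exact: rank_shift (staircase_rank_corank sA aA) (rank_add_corank a2E) card_E c_le1.
Qed.
End EndpointBijection.

Section Counting.
Variable n : nat.
Implicit Types (A : {set 'I_n * 'I_n}) (J S : {set 'I_n}).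

Lemma mem_AsJ s J A :
  (A \in AsJ s J) = [&& staircase A, #|A| == s & endpoints A \subset ~: J].
Proof.
rewrite AsJ_endpoints inE As_staircase -andbA; congr [&& _, _ & _].
apply/forall_inP/subsetP => [ends y | sub p pA].
  by rewrite /endpoints inE => /orP[] /imsetP[p pA ->]; rewrite inE; case/andP: (ends p pA).
by rewrite -!in_setC !sub // /endpoints inE (imset_f _ pA) ?orbT.
Qed.

Lemma card_AsJ0 J : #|AsJ 0 J| = 1.
Proof.
apply/eqP/cards1P; exists set0; apply/setP => A; rewrite mem_AsJ !inE cards_eq0.
have [->|] := eqVneq A set0; last by rewrite andbF.
apply/and3P; split => //.
  by apply/staircaseP; split => [|a b|a b]; rewrite ?sub0set ?inE.
by apply/subsetP => y; rewrite /endpoints inE => /orP[] /imsetP[p]; rewrite inE.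
Qed.

Lemma endpoints_AsJ s J : (0 < s)%N ->
  @endpoints n @: AsJ s J =
  [set S : {set 'I_n} | (S \subset ~: J) && (#|S| == s.*2)] :|: [set S : {set 'I_n} | (S \subset ~: J) && (#|S| == s.*2.-1)].
Proof.
move=> s_gt0; apply/setP => S; rewrite !inE -andb_orr; apply/imsetP/andP.
- case=> A; rewrite mem_AsJ => /and3P[sA /eqP <- subJ] ->; split => //.
  have [c c_le1 card_E] := card_endpoints sA.
  case: c c_le1 card_E => [|[|//]] _ card_E.
    by rewrite addn0 addnn in card_E; rewrite card_E eqxx.
  by rewrite addn1 addnn in card_E; rewrite -card_E /= eqxx orbT.
- case=> subJ card_S; exists (staircase_of S); last by rewrite endpoints_staircase_of.
  rewrite mem_AsJ staircase_of_staircase endpoints_staircase_of subJ andbT /=.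
  rewrite card_staircase_of; apply/eqP; case/orP: card_S => /eqP card_S.
    have e : #|S| + 0 = s + s by rewrite addn0 card_S addnn.
    by case: (half_split e isT).
  have e : #|S| + 1 = s + s by rewrite card_S addn1 prednK ?double_gt0 // addnn.
  by case: (half_split e isT).
Qed.

(* Part 2 of the theorem: endpoints is injective on A_{s,J}. *)
Lemma card_AsJ J s : (0 < s)%N ->
  #|AsJ s J| = ('C(n - #|J|, s.*2) + 'C(n - #|J|, s.*2.-1))%N.
Proof.
move=> s_gt0; have card_compl : #|~: J| = n - #|J| by rewrite -[X in X - _](card_ord n) -(cardsC J) addKn.
have inj : {in AsJ s J &, injective (@endpoints n)}.
  move=> A B; rewrite !mem_AsJ => /and3P[sA _ _] /and3P[sB _ _] e.
  by rewrite -(staircase_of_endpoints sA) -(staircase_of_endpoints sB) e.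
rewrite -(card_in_imset inj) endpoints_AsJ // cardsU !cards_draws card_compl.
suff -> : [set S : {set 'I_n} | (S \subset ~: J) && (#|S| == s.*2)] :&:
          [set S : {set 'I_n} | (S \subset ~: J) && (#|S| == s.*2.-1)] = set0 by rewrite cards0 subn0.
apply/setP => S; rewrite !inE; apply/negbTE/negP => /andP[/andP[_ /eqP ->] /andP[_]].
by rewrite -(prednK s_gt0) doubleS /= => /eqP; lia.
Qed.
End Counting.

Lemma sum_binomial_prefix m M : (m < M)%N -> \sum_(i < M) 'C(m, i) = 2 ^ m.
Proof.
elim: M => // M IH; rewrite ltnS leq_eqVlt => /orP[/eqP <-|lt_mM].
  by rewrite -[2]/(1 + 1) expnDn; apply: eq_bigr => i _; rewrite !exp1n !muln1.
by rewrite big_ord_recr /= IH // bin_small // addn0.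
Qed.

Lemma sum_binomial_pairs m K :
  1 + \sum_(i < K) ('C(m, i.+1.*2) + 'C(m, i.+1.*2.-1)) = \sum_(i < K.*2.+1) 'C(m, i).
Proof.
elim: K => [|K IH]; first by rewrite big_ord0 big_ord1 bin0.
rewrite big_ord_recr /= addnA IH doubleS /= !big_ord_recr /= -!addnA.
by rewrite [('C(m, _.+2) + _)]addnC.
Qed.

Theorem mainTheorem7 (n : nat) (hn : (0 < n)%N) (J : {set 'I_n}) :
  (forall s : nat, (1 <= s)%N ->
     AsJ s J = [set A in As n s | [forall p in A, (p.1 \notin J) && (p.2 \notin J)]])
  /\ (forall s : nat, (1 <= s)%N ->
     #|AsJ s J| = ('C(n - #|J|, s.*2) + 'C(n - #|J|, s.*2.-1))%N)
  /\ (\sum_(s < #|{: 'I_n * 'I_n}|.+1) #|AsJ s J|)%N = 2 ^ (n - #|J|).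
Proof.
split; first by move=> s _; exact: AsJ_endpoints.
split; first by move=> s; exact: card_AsJ.
rewrite big_ord_recl card_AsJ0; under eq_bigr => i _ do rewrite lift0 card_AsJ //.
rewrite sum_binomial_pairs sum_binomial_prefix // card_prod card_ord ltnS -addnn.
by apply: leq_trans (leq_subr _ _) _; rewrite (leq_trans _ (leq_addr _ _)) // leq_pmull.
Qed.
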